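(* For every positive integer $n$, $$b^{2}_{3,8}(2n+1)\equiv 2\,b_{2,3}(n)\pmod 3.$$
   Context: For integers $r\ge1$ write $f_r=\prod_{j\ge1}(1-q^{rj})$. For coprime positive integers $\ell,m$ and a positive integer $k$, $b^{k}_{\ell,m}(n)$ denotes the number of $k$-colored partitions of $n$ into parts not divisible by $\ell$ or by $m$, i.e. $\sum_{n\ge0} b^{k}_{\ell,m}(n)q^n=\dfrac{f_\ell^k f_m^k}{f_1^k f_{\ell m}^k}$, and $b_{\ell,m}=b^1_{\ell,m}$. Thus $\sum b^2_{3,8}(n)q^n=\dfrac{f_3^2f_8^2}{f_1^2f_{24}^2}$ and $\sum b_{2,3}(n)q^n=\dfrac{f_2f_3}{f_1f_6}$. *)

From mathcomp Require Import all_boot all_order all_algebra.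
Set Implicit Arguments. Unset Strict Implicit. Unset Printing Implicit Defensive.
Import GRing.Theory.
Local Open Scope ring_scope.

Definition geom_trunc (N j : nat) : {poly int} := \sum_(i < N.+1) 'X^(i * j).

(* Truncated generating function of k-colored partitions into parts not
   divisible by l nor by m:  prod_{j >= 1, l !| j, m !| j} (1 - q^j)^(-k),
   keeping only parts j <= N and truncating each geometric factor at degree N.
   Its coefficients of degree <= N agree with the full infinite product. *)
Definition bpoly (k l m N : nat) : {poly int} :=
  \prod_(1 <= j < N.+1 | ~~ (l %| j)%N && ~~ (m %| j)%N) (geom_trunc N j) ^+ k.

(* b^k_{l,m}(n) : coefficient of q^n in f_l^k f_m^k / (f_1^k f_{lm}^k)
   (for coprime l, m this equals prod_{l !| j, m !| j} (1-q^j)^(-k)). *)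
Definition bklm (k l m n : nat) : int := (bpoly k l m n)`_n.

From mathcomp Require Import all_boot all_order all_algebra.
From mathcomp Require Import zify ring.
Set Implicit Arguments. Unset Strict Implicit. Unset Printing Implicit Defensive.
Import GRing.Theory.
Local Open Scope ring_scope.

(* Modulo 3 we have f_3 = f_1^3 and f_24 = f_8^3, so the generating functions
   become sum b^2_{3,8}(n) q^n = f_1^4 / f_8^4 and sum b_{2,3}(n) q^n = f_1^2 / f_2^2.
   Jacobi's triple product gives phi(-q) = f_1^2 / f_2 and phi(q) psi(q^2) = f_2^4 / f_1^2
   for Ramanujan's theta functions phi and psi.  The 2-dissection
   phi(-q) = phi(q^4) - 2 q psi(q^8) shows that the odd part of
   f_1^4 = phi(-q)^2 f_2^2 is -4 q f_2^2 phi(q^4) psi(q^8) = -4 q f_2^2 f_8^4 / f_4^2.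
   As f_8(q) = f_4(q^2), the odd part of f_1^4 / f_8^4 is -4 q f_2^2 / f_4^2, that is
   sum b^2_{3,8}(2n+1) q^n = -4 f_1^2 / f_2^2 = 2 sum b_{2,3}(n) q^n modulo 3.
   Power series are represented by polynomials compared below a given degree,
   [p = q %[modX n]]. *)

(** * Truncated power series *)

Definition eqX (R : nzRingType) (n : nat) (p q : {poly R}) :=
  forall i, (i < n)%N -> p`_i = q`_i.

Notation "p = q %[modX n ]" := (eqX n p q) : ring_scope.

Section TruncatedEquality.
Variable R : nzRingType.
Implicit Types p q r u : {poly R}.

Lemma eqX_sym n p q : p = q %[modX n] -> q = p %[modX n].
Proof. by move=> pq i /pq. Qed.

Lemma eqX_trans n p q r : p = q %[modX n] -> q = r %[modX n] -> p = r %[modX n].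
Proof. by move=> pq qr i lt_in; rewrite pq // qr. Qed.

Lemma eqX_le m n p q : (m <= n)%N -> p = q %[modX n] -> p = q %[modX m].
Proof. by move=> le_mn pq i lt_im; apply: pq; apply: leq_trans le_mn. Qed.

Lemma eqXD n p q p' q' :
  p = p' %[modX n] -> q = q' %[modX n] -> p + q = p' + q' %[modX n].
Proof. by move=> pp' qq' i lt_in; rewrite !coefD pp' // qq'. Qed.

Lemma eqXM n p q p' q' :
  p = p' %[modX n] -> q = q' %[modX n] -> p * q = p' * q' %[modX n].
Proof.
move=> pp' qq' i lt_in; rewrite !coefM; apply: eq_bigr => j _.
by rewrite pp' ?qq' //; apply: leq_ltn_trans lt_in; [apply: leq_subr | rewrite -ltnS].
Qed.

Lemma eqXMl n p q r : p = q %[modX n] -> r * p = r * q %[modX n].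
Proof. exact: eqXM. Qed.

Lemma eqXMr n p q r : p = q %[modX n] -> p * r = q * r %[modX n].
Proof. by move=> pq; apply: eqXM. Qed.

Lemma eqXXn n p q k : p = q %[modX n] -> p ^+ k = q ^+ k %[modX n].
Proof.
by move=> pq; elim: k => [|k IHk]; rewrite ?expr0 // !exprS; apply: eqXM.
Qed.

Lemma eqX_sum n I (s : seq I) (P : pred I) (F G : I -> {poly R}) :
  (forall i, P i -> F i = G i %[modX n]) ->
  \sum_(i <- s | P i) F i = \sum_(i <- s | P i) G i %[modX n].
Proof. by move=> FG; apply: (big_ind2 (eqX n)) => // *; apply: eqXD. Qed.

Lemma eqX_prod1 n I (s : seq I) (P : pred I) (F : I -> {poly R}) :
  (forall i, P i -> F i = 1 %[modX n]) -> \prod_(i <- s | P i) F i = 1 %[modX n].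
Proof.
move=> F1; apply: (big_ind (eqX n ^~ 1)) => // p q p1 q1.
by rewrite -(mulr1 1); apply: eqXM.
Qed.

Lemma eqX_XnM0 n k p : (n <= k)%N -> 'X^k * p = 0 %[modX n].
Proof.
by move=> le_nk i lt_in; rewrite coefXnM coef0 (leq_trans lt_in le_nk).
Qed.

Lemma eqX_1DMXn n e p : (n <= e)%N -> 1 + p * 'X^e = 1 %[modX n].
Proof.
move=> le_ne i lt_in; rewrite coefD coefMXn coef1.
by rewrite (leq_trans lt_in le_ne) addr0.
Qed.

Lemma eqX_1BXn n e : (n <= e)%N -> 1 - ('X^e : {poly R}) = 1 %[modX n].
Proof. by move=> le_ne; rewrite -mulN1r; apply: eqX_1DMXn. Qed.

Lemma eqX_XnM n s p q : p = q %[modX n] -> 'X^s * p = 'X^s * q %[modX s + n].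
Proof.
move=> pq i lt_i; rewrite !coefXnM; case: ltnP => // le_si.
by apply: pq; rewrite ltn_subLR.
Qed.

Lemma eqX_XnMI n s p q : 'X^s * p = 'X^s * q %[modX s + n] -> p = q %[modX n].
Proof.
move=> pq i lt_in; have := pq (s + i)%N; rewrite ltn_add2l => /(_ lt_in).
by rewrite !coefXnM ltnNge leq_addr addKn.
Qed.

Lemma coef0_exprn p k : (p ^+ k)`_0 = p`_0 ^+ k.
Proof. by elim: k => [|k IHk]; rewrite ?coef1 // !exprS coef0M IHk. Qed.

Lemma eqX_mulIr n p q u : u`_0 = 1 -> p * u = q * u %[modX n] -> p = q %[modX n].
Proof.
move=> u0 pq; elim/ltn_ind=> i IHi lt_in; have := pq i lt_in.
rewrite !coefM !big_ord_recr /= subnn u0 !mulr1.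
rewrite (eq_bigr (fun j : 'I_i => q`_j * u`_(i - j))) => [/addrI //|j _].
by rewrite IHi // (ltn_trans _ lt_in).
Qed.

End TruncatedEquality.

(** * Gaussian binomials and Jacobi's triple product *)

Lemma sumr_ord_shift (V : zmodType) m (f : nat -> V) :
  \sum_(j < m.+1) f j.+1 = \sum_(j < m.+1) f j + f m.+1 - f 0%N.
Proof.
have recl : \sum_(j < m.+2) f j = f 0%N + \sum_(j < m.+1) f j.+1 := big_ord_recl _ _.
have recr : \sum_(j < m.+2) f j = \sum_(j < m.+1) f j + f m.+1 := big_ord_recr _ _.
by rewrite -recr recl addrC addKr.
Qed.

Section SumReflect.
Variable V : nmodType.

Lemma sum_ord_addnn n (G : nat -> V) :
  \sum_(j < n + n) G j = \sum_(k < n) (G (n + k)%N + G (n - k.+1)%N).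
Proof.
rewrite big_split_ord /= big_split /= addrC; congr (_ + _).
by rewrite (reindex_inj rev_ord_inj).
Qed.

Lemma sum_ord_addnn1 n (G : nat -> V) :
  \sum_(j < (n + n).+1) G j = G n + \sum_(k < n) (G (n + k.+1)%N + G (n - k.+1)%N).
Proof.
rewrite -addnS big_split_ord /= big_ord_recl big_split /= addn0 addrCA.
by congr (_ + _); rewrite addrC; congr (_ + _); rewrite (reindex_inj rev_ord_inj).
Qed.

Lemma sum_ord_mul2 n (G : nat -> V) :
  \sum_(i < 2 * n) G i = \sum_(i < n) (G (2 * i)%N + G (2 * i).+1).
Proof.
elim: n => [|n IHn]; first by rewrite !big_ord0.
by rewrite mulnS !big_ord_recr /= IHn addrA.
Qed.

End SumReflect.

Lemma bin2S n : 'C(n.+1, 2) = ('C(n, 2) + n)%N.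
Proof. by rewrite binS bin1. Qed.

(* [(j - b) choose 2] for the integer j - b, i.e. (j - b) (j - b - 1) / 2. *)
Definition bin2z (j b : nat) : nat :=
  if (b <= j)%N then 'C(j - b, 2) else 'C(b - j + 1, 2).

Lemma bin2z0 j : bin2z j 0 = 'C(j, 2).
Proof. by rewrite /bin2z subn0. Qed.

Lemma bin2zSS j b : bin2z j.+1 b.+1 = bin2z j b.
Proof. by rewrite /bin2z ltnS subSS. Qed.

Lemma bin2zS j b : (bin2z j.+1 b + b = bin2z j b + j)%N.
Proof.
rewrite /bin2z; case: (leqP b j) => [le_bj | lt_jb].
  by rewrite (leqW le_bj) subSn // bin2S; lia.
case: (leqP b j.+1) => [le_bj1 | lt_j1b].
  have -> : b = j.+1 by lia.
  by rewrite subnn subSn // subnn bin0n.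
have -> : (b - j + 1 = (b - j.+1 + 1).+1)%N by lia.
by rewrite bin2S; lia.
Qed.

Lemma bin2z0S b : bin2z 0 b.+1 = (bin2z 0 b + b.+1)%N.
Proof. by rewrite /bin2z !subn0 !addn1 bin2S; case: b. Qed.

Lemma leq_bin2 t : (t.-1 <= 'C(t, 2))%N.
Proof. by case: t => // t; rewrite bin2S leq_addl. Qed.

Lemma double_bin2 t : ('C(t, 2)).*2 = (t * t.-1)%N.
Proof. by elim: t => // t IHt; rewrite bin2S doubleD IHt; case: t {IHt} => //= t; lia. Qed.

Lemma bin2z_ge j n : (n <= j + bin2z j n)%N.
Proof.
rewrite /bin2z; case: (leqP n j) => [le_nj | lt_jn]; first lia.
by have := leq_bin2 (n - j + 1); rewrite addn1 /=; lia.
Qed.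

Lemma bin2z_far M n j : (2 * M < n)%N -> (j < M)%N || (n + n < j + M)%N ->
  (n + M <= j + bin2z j n)%N.
Proof.
move=> lt_2Mn /orP[lt_jM | far]; rewrite /bin2z.
  rewrite (leqNgt n j) (_ : j < n)%N /= ?addn1 ?bin2S; last lia.
  by have := leq_bin2 (n - j); lia.
by rewrite (_ : n <= j)%N; lia.
Qed.

Section QBinomial.
Variables (R : comNzRingType) (q : R).

Fixpoint qbin (m j : nat) : R :=
  match m, j with
  | _, 0 => 1
  | 0, _.+1 => 0
  | m'.+1, j'.+1 => qbin m' j' + q ^+ j'.+1 * qbin m' j'.+1
  end.

Definition qpoch (t : nat) : R := \prod_(i < t) (1 - q ^+ i.+1).

Lemma qbin0 m : qbin m 0 = 1. Proof. by case: m. Qed.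

Lemma qbinS m j : qbin m.+1 j.+1 = qbin m j + q ^+ j.+1 * qbin m j.+1.
Proof. by []. Qed.

Lemma qbin_small m j : (m < j)%N -> qbin m j = 0.
Proof.
elim: m j => [|m IHm] [|j] //= lt_mj.
by rewrite !IHm ?mulr0 ?addr0 // ltnW.
Qed.

Lemma qpoch0 : qpoch 0 = 1. Proof. by rewrite /qpoch big_ord0. Qed.

Lemma qpochS t : qpoch t.+1 = qpoch t * (1 - q ^+ t.+1).
Proof. by rewrite /qpoch big_ord_recr. Qed.

Lemma qbin_qpoch m j : (j <= m)%N -> qbin m j * qpoch j * qpoch (m - j) = qpoch m.
Proof.
elim: m j => [|m IHm] [|j] le_jm //; rewrite ?qbin0 ?qpoch0 ?subn0 ?mul1r //.
have IHj := IHm j le_jm; rewrite qbinS subSS qpochS [qpoch m.+1]qpochS.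
have [lt_jm | ge_jm] := ltnP j m; last first.
  have ej : j = m by apply/eqP; rewrite eqn_leq ge_jm -ltnS le_jm.
  subst j.
  rewrite subnn (qbin_small (ltnSn m)) mulr0 addr0 qpoch0 mulr1.
  by rewrite mulrA; congr (_ * _); move: IHj; rewrite subnn qpoch0 mulr1.
have IHj1 := IHm j.+1 lt_jm.
have def_mj : (m - j = (m - j.+1).+1)%N by lia.
rewrite def_mj qpochS in IHj *; rewrite qpochS in IHj1.
set t := (m - j.+1).+1 in IHj *.
transitivity (qbin m j * qpoch j * (qpoch (m - j.+1) * (1 - q ^+ t)) * (1 - q ^+ j.+1) +
    q ^+ j.+1 * (qbin m j.+1 * (qpoch j * (1 - q ^+ j.+1)) * qpoch (m - j.+1))
      * (1 - q ^+ t)).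
  by ring.
have -> : (m.+1 = j.+1 + t)%N by rewrite /t; lia.
by rewrite IHj IHj1 exprD; ring.
Qed.

Lemma q_binomial a z :
  \prod_(i < a) (1 + z * q ^+ i) = \sum_(j < a.+1) z ^+ j * q ^+ 'C(j, 2) * qbin a j.
Proof.
elim: a z => [|a IHa] z; first by rewrite big_ord0 big_ord1 bin0n !mulr1.
pose g j := (z * q) ^+ j * q ^+ 'C(j, 2) * qbin a j.
have recS j : z ^+ j.+1 * q ^+ 'C(j.+1, 2) * qbin a.+1 j.+1 = z * g j + g j.+1.
  by rewrite /g qbinS !bin2S !exprD exprMn !exprS !exprMn; ring.
rewrite big_ord_recl expr0 mulr1.
under eq_bigr do rewrite lift0 exprS mulrA.
rewrite IHa -/(\sum_(j < a.+1) g j) [RHS]big_ord_recl qbin0 bin0n expr0 !mulr1.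
rewrite (eq_bigr (fun j : 'I_a.+1 => z * g j + g j.+1) (fun j _ => recS j)).
rewrite big_split /= -mulr_sumr sumr_ord_shift.
have g0 : g 0%N = 1 by rewrite /g expr0 bin0n qbin0 !mulr1.
have g_top : g a.+1 = 0 by rewrite /g qbin_small // mulr0.
by rewrite g_top g0; ring.
Qed.

Lemma jacobi_triple_finite a b z :
  \prod_(i < a) (1 + z * q ^+ i) * \prod_(i < b) (z + q ^+ i.+1) =
  \sum_(j < (a + b).+1) z ^+ j * q ^+ bin2z j b * qbin (a + b) j.
Proof.
elim: b => [|b IHb].
  by rewrite big_ord0 mulr1 addn0 q_binomial; under [RHS]eq_bigr do rewrite bin2z0.
rewrite big_ord_recr mulrA IHb addnS; set m := (a + b)%N.
pose g j := z ^+ j * q ^+ bin2z j b * qbin m j.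
have recS j :
    z ^+ j.+1 * q ^+ bin2z j.+1 b.+1 * qbin m.+1 j.+1 = z * g j + q ^+ b.+1 * g j.+1.
  have e : q ^+ bin2z j b * q ^+ j.+1 = q ^+ b.+1 * q ^+ bin2z j.+1 b.
    by rewrite -!exprD; congr (q ^+ _); have := bin2zS j b; lia.
  transitivity (z * g j + z ^+ j.+1 * (q ^+ bin2z j b * q ^+ j.+1) * qbin m j.+1).
    by rewrite /g qbinS bin2zSS !exprS; ring.
  by rewrite e /g !exprS; ring.
rewrite -/(\sum_(j < m.+1) g j) [RHS]big_ord_recl /=.
rewrite (eq_bigr (fun j : 'I_m.+1 => z * g j + q ^+ b.+1 * g j.+1) (fun j _ => recS j)).
rewrite big_split /= -!mulr_sumr sumr_ord_shift.
by rewrite /g bin2z0S exprD (qbin_small (ltnSn m)) qbin0 expr0; ring.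
Qed.

End QBinomial.

(** * Euler products and theta functions *)

Section QPochhammerX.
Variable R : comNzRingType.
Implicit Types a : R.

(* [pochX a b k L] is the q-Pochhammer symbol (-a q^b; q^k)_L and [eulerf k L]
   truncates f_k = (q^k; q^k)_oo. *)
Definition pochX a (b k L : nat) : {poly R} := \prod_(i < L) (1 + a%:P * 'X^(b + k * i)).

Definition eulerf (k L : nat) : {poly R} := pochX (-1) k k L.

Lemma qpoch_Xn k L : qpoch ('X^k : {poly R}) L = eulerf k L.
Proof. by apply: eq_bigr => i _; rewrite polyCN polyC1 mulN1r -exprM mulnS. Qed.

Lemma pochX_eqX a b k m t n : (m <= t)%N -> (n <= b + k * m)%N ->
  pochX a b k t = pochX a b k m %[modX n].
Proof.
move=> le_mt le_n; rewrite /pochX -(subnKC le_mt) big_split_ord /=.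
rewrite -[X in _ = X %[modX n]]mulr1; apply: eqXMl; apply: eqX_prod1 => i _.
by apply: eqX_1DMXn; apply: leq_trans le_n _; rewrite leq_add2l leq_mul2l leq_addr orbT.
Qed.

Lemma pochX_coef0 a b k L : (0 < b)%N -> (pochX a b k L)`_0 = 1.
Proof.
move=> b_gt0; rewrite coef0_prod big1 // => i _.
rewrite coefD coef1 coefCM coefXn (_ : 0 == b + k * i = false)%N ?mulr0 ?addr0 //; lia.
Qed.

Lemma eulerf_coef0 k L : (0 < k)%N -> (eulerf k L)`_0 = 1.
Proof. exact: pochX_coef0. Qed.

Lemma pochX_comp a b k L d : pochX a b k L \Po 'X^d = pochX a (d * b) (d * k) L.
Proof.
rewrite /pochX rmorph_prod; apply: eq_bigr => i _.
by rewrite rmorphD rmorph1 rmorphM /= comp_polyC comp_Xn_poly -exprM mulnDr mulnA.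
Qed.

Lemma eulerf_comp k L d : eulerf k L \Po 'X^d = eulerf (d * k) L.
Proof. exact: pochX_comp. Qed.

Lemma pochX_double a b k L :
  pochX a b k (2 * L) = pochX a b (2 * k) L * pochX a (b + k) (2 * k) L.
Proof.
rewrite /pochX; elim: L => [|L IHL]; first by rewrite !big_ord0 mulr1.
rewrite (_ : 2 * L.+1 = (2 * L).+2)%N; last lia.
rewrite !big_ord_recr /= IHL.
have -> : (b + k * (2 * L) = b + 2 * k * L)%N by rewrite mulnCA mulnA.
have -> : (b + k * (2 * L).+1 = b + k + 2 * k * L)%N by rewrite mulnS mulnCA mulnA addnA.
by rewrite -!mulrA; congr (_ * _); rewrite mulrCA.
Qed.

Lemma pochXN a b k L :
  pochX a b k L * pochX (- a) b k L = pochX (- (a * a)) (2 * b) (2 * k) L.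
Proof.
rewrite /pochX -big_split /=; apply: eq_bigr => i _.
by rewrite -mulnA -mulnDr [(2 * _)%N]mulnC exprM !polyCN polyCM; ring.
Qed.

End QPochhammerX.

Section ThetaProducts.
Variable R : comNzRingType.
Implicit Types s c : R.

Lemma qbin_eulerf_eqX k m j n : (0 < k)%N -> (n <= j)%N -> (n <= m - j)%N ->
  qbin ('X^k : {poly R}) m j * eulerf R k n = 1 %[modX n].
Proof.
move=> k_gt0 le_nj le_n_mj; have [-> // | n_gt0] := posnP n.
have eqX_euler t : (n <= t)%N -> qpoch ('X^k : {poly R}) t = eulerf R k n %[modX n].
  move=> le_nt; rewrite qpoch_Xn; apply: pochX_eqX => //.
  exact: leq_trans (leq_pmull n k_gt0) (leq_addl _ _).
apply: (@eqX_mulIr _ _ _ _ (eulerf R k n)); first exact: eulerf_coef0.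
rewrite mul1r -mulrA; apply: eqX_trans (eqX_euler m _); last lia.
rewrite -(qbin_qpoch _ (_ : j <= m)%N); last lia.
by rewrite -mulrA; apply/eqXMl/eqXM; apply/eqX_sym/eqX_euler.
Qed.

(* Near the middle index the Gaussian binomial times (q; q)_M is 1 modulo X^M;
   away from it the factor X^(j + k bin2z j n) is already beyond X^(n + M). *)
Lemma jacobi_eqX c k M n : (0 < k)%N -> (2 * M < n)%N ->
  \prod_(i < n) (1 + c%:P * 'X * 'X^k ^+ i) * \prod_(i < n) (c%:P * 'X + 'X^k ^+ i.+1)
    * eulerf R k M =
  \sum_(j < (n + n).+1) (c ^+ j)%:P * 'X^(j + k * bin2z j n) %[modX n + M].
Proof.
move=> k_gt0 lt_2Mn; rewrite jacobi_triple_finite mulr_suml; apply: eqX_sum => j _.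
set e := (j + k * bin2z j n)%N.
have le_ne : (n <= e)%N.
  by apply: leq_trans (bin2z_ge j n) _; rewrite leq_add2l leq_pmull.
have -> : (c%:P * 'X) ^+ j * 'X^k ^+ bin2z j n * qbin 'X^k (n + n) j * eulerf R k M =
    (c ^+ j)%:P * ('X^e * (qbin 'X^k (n + n) j * eulerf R k M)).
  by rewrite rmorphXn /= exprMn -exprM exprD; ring.
rewrite -[X in _ = X %[modX _]]mulr1 -mulrA; apply: eqXMl.
have [/andP[le_Mj le_jM] | ] := boolP ((M <= j) && (j + M <= n + n))%N.
  apply: (@eqX_le _ _ (e + M)); first by rewrite leq_add2r.
  by apply: eqX_XnM; apply: qbin_eulerf_eqX => //; lia.
rewrite negb_and -!ltnNge => far.
have le_nMe : (n + M <= e)%N.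
  by apply: leq_trans (bin2z_far lt_2Mn far) _; rewrite leq_add2l leq_pmull.
by apply: eqX_trans (eqX_XnM0 _ le_nMe) (eqX_sym (eqX_XnM0 _ le_nMe)).
Qed.

(* Truncations of Ramanujan's phi(s q) = sum_(k in Z) s^k q^(k^2) and
   psi(q) = sum_(k >= 0) q^(k (k + 1) / 2). *)
Definition theta s K : {poly R} :=
  1 + 2%:R * \sum_(k < K) (s ^+ k.+1)%:P * 'X^(k.+1 ^ 2).

Definition psi K : {poly R} := \sum_(l < K) 'X^('C(l.+1, 2)).

Lemma theta_eqX s K M : (M <= K)%N -> theta s K = theta s M %[modX M].
Proof.
move=> le_MK i lt_iM; rewrite /theta -(subnKC le_MK) big_split_ord /= mulrDr addrA coefD.
have -> : (2%:R * \sum_(k < K - M) (s ^+ (M + k).+1)%:P * 'X^((M + k).+1 ^ 2))`_i = 0.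
  rewrite mulr_natl coefMn coef_sum big1 ?mul0rn // => k _.
  by rewrite coefCM coefXn (_ : i == _ = false)%N ?mulr0 //; nia.
by rewrite addr0.
Qed.

Lemma psi_eqX K M : (M <= K)%N -> psi K = psi M %[modX M].
Proof.
move=> le_MK i lt_iM; rewrite /psi -(subnKC le_MK) big_split_ord /= coefD.
have -> : (\sum_(l < K - M) 'X^('C((M + l).+1, 2)) : {poly R})`_i = 0.
  rewrite coef_sum big1 // => l _; rewrite coefXn (_ : i == _ = false)%N //.
  by have := leq_bin2 (M + l).+1; lia.
by rewrite addr0.
Qed.

Lemma sqr1_exprD2 s a b : s * s = 1 -> s ^+ (a + 2 * b) = s ^+ a.
Proof. by move=> ss1; rewrite exprD exprM expr2 ss1 expr1n mulr1. Qed.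

Lemma theta_jacobi_sum s n : s * s = 1 ->
  \sum_(j < (n + n).+1) (s ^+ j)%:P * 'X^(j + 2 * bin2z j n) =
  (s ^+ n)%:P * 'X^n * theta s n.
Proof.
move=> ss1; rewrite (sum_ord_addnn1 n (fun j => (s ^+ j)%:P * 'X^(j + 2 * bin2z j n))).
rewrite /theta /bin2z leqnn subnn bin0n /= muln0 addn0.
rewrite mulrDr mulr1 mulr_sumr mulr_sumr; congr (_ + _); apply: eq_bigr => k _.
have kn := ltn_ord k.
rewrite leq_addr (leqNgt n) (_ : n - k.+1 < n)%N /=; last lia.
rewrite addKn (_ : n - (n - k.+1) + 1 = k.+2)%N; last lia.
have -> : (n + k.+1 + 2 * 'C(k.+1, 2) = n + k.+1 ^ 2)%N.
  by rewrite mul2n double_bin2; nia.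
have -> : (n - k.+1 + 2 * 'C(k.+2, 2) = n + k.+1 ^ 2)%N.
  by rewrite mul2n double_bin2; nia.
have -> : s ^+ (n - k.+1) = s ^+ (n + k.+1).
  by rewrite -(sqr1_exprD2 (n - k.+1) k.+1 ss1); congr (s ^+ _); lia.
by rewrite !exprD rmorphM /=; ring.
Qed.

Lemma psi_jacobi_sum n :
  \sum_(j < (n + n).+1) 'X^(j + bin2z j n) =
  'X^n * (2%:R * psi n + 'X^('C(n.+1, 2))) :> {poly R}.
Proof.
rewrite big_ord_recr /= (sum_ord_addnn n (fun j => 'X^(j + bin2z j n))) /psi /bin2z.
rewrite leq_addr addKn mulrDr -exprD mulr_sumr mulr_sumr; congr (_ + 'X^_); last first.
  by rewrite bin2S; lia.
apply: eq_bigr => l _; have ln := ltn_ord l.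
rewrite leq_addr (leqNgt n) (_ : n - l.+1 < n)%N /=; last lia.
rewrite addKn (_ : n - (n - l.+1) + 1 = l.+2)%N; last lia.
have -> : (n + l + 'C(l, 2) = n + 'C(l.+1, 2))%N by rewrite bin2S; lia.
have -> : (n - l.+1 + 'C(l.+2, 2) = n + 'C(l.+1, 2))%N by rewrite !bin2S; lia.
by rewrite exprD; ring.
Qed.

Lemma theta_pochX s M : s * s = 1 ->
  pochX s 1 2 M ^+ 2 * eulerf R 2 M = theta s M %[modX M].
Proof.
move=> ss1; set n := (2 * M).+1; set A := pochX s 1 2.
have le_Mn : (M <= n)%N by rewrite /n; lia.
have sP : s%:P * s%:P = 1 :> {poly R} by rewrite -polyCM ss1.
have sn : (s ^+ n)%:P * (s ^+ n)%:P = 1 :> {poly R}.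
  by rewrite -polyCM -exprMn ss1 expr1n.
have J := jacobi_eqX s (isT : 0 < 2)%N (ltnSn (2 * M)).
rewrite -/n theta_jacobi_sum // in J.
have L1 : \prod_(i < n) (1 + s%:P * 'X * 'X^2 ^+ i) = A n.
  by apply: eq_bigr => i _; rewrite -exprM -mulrA -exprS.
have L2 : \prod_(i < n) (s%:P * 'X + 'X^2 ^+ i.+1) = (s ^+ n)%:P * 'X^n * A n.
  transitivity (\prod_(i < n) (s%:P * 'X * (1 + s%:P * 'X^(1 + 2 * i)))).
    apply: eq_bigr => i _; rewrite mulrDr mulr1; congr (_ + _).
    by rewrite mulrACA sP mul1r -exprS -exprM; congr 'X^_; lia.
  by rewrite big_split /= prodr_const card_ord exprMn rmorphXn.
rewrite L1 L2 in J; move/(eqXMl ((s ^+ n)%:P)): J.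
have -> : (s ^+ n)%:P * (A n * ((s ^+ n)%:P * 'X^n * A n) * eulerf R 2 M) =
          ((s ^+ n)%:P * (s ^+ n)%:P) * ('X^n * (A n ^+ 2 * eulerf R 2 M)) by ring.
have -> : (s ^+ n)%:P * ((s ^+ n)%:P * 'X^n * theta s n) =
          ((s ^+ n)%:P * (s ^+ n)%:P) * ('X^n * theta s n) by ring.
rewrite sn !mul1r => /eqX_XnMI J.
apply: eqX_trans (eqX_trans J (theta_eqX s le_Mn)).
by apply/eqXMr/eqXXn/eqX_sym/pochX_eqX => //; lia.
Qed.

(* Jacobi's triple product at z = q contains the factor 1 + q^0 = 2, which need not
   be invertible in R. *)
Lemma psi_pochX M :
  2%:R * (pochX 1 1 1 M ^+ 2 * eulerf R 1 M) = 2%:R * psi M %[modX M].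
Proof.
set n := (2 * M).+1; set D := pochX (1 : R) 1 1.
have J := jacobi_eqX (1 : R) (isT : 0 < 1)%N (ltnSn (2 * M)).
have L1 : \prod_(i < n) (1 + 1%:P * 'X * 'X^1 ^+ i) = D n.
  by apply: eq_bigr => i _; rewrite polyC1 !mul1r mul1n expr1 -exprS.
have L2 : \prod_(i < n) (1%:P * 'X + 'X^1 ^+ i.+1) = 'X^n * (2%:R * D (2 * M)%N).
  transitivity (\prod_(i < n) ('X * (1 + 'X^i)) : {poly R}).
    by apply: eq_bigr => i _; rewrite polyC1 mul1r expr1 mulrDr mulr1 -exprS.
  rewrite big_split /= prodr_const card_ord big_ord_recl expr0; congr (_ * (_ * _)).
  by apply: eq_bigr => i _; rewrite polyC1 mul1r mul1n.
have S : \sum_(j < (n + n).+1) ((1 : R) ^+ j)%:P * 'X^(j + 1 * bin2z j n) =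
         'X^n * (2%:R * psi n + 'X^('C(n.+1, 2))).
  by rewrite -psi_jacobi_sum; apply: eq_bigr => j _; rewrite expr1n polyC1 mul1r mul1n.
rewrite -/n L1 L2 S in J.
have {}J : 2%:R * (D n * D (2 * M)%N * eulerf R 1 M) =
           2%:R * psi n + 'X^('C(n.+1, 2)) %[modX M].
  by apply: (@eqX_XnMI _ _ n); move: J; rewrite mulrCA -!mulrA [D n * _]mulrCA.
have le_Mn : (M <= n)%N by rewrite /n; lia.
apply: eqX_trans (eqX_trans J _).
  by rewrite expr2; apply/eqXMl/eqXMr/eqXM; apply/eqX_sym/pochX_eqX => //; lia.
rewrite -[X in _ = X %[modX M]]addr0 -['X^_]mulr1.
apply: eqXD; first exact/eqXMl/psi_eqX.
by apply: eqX_XnM0; apply: leq_trans (leq_bin2 n.+1); rewrite /n /=; lia.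
Qed.

End ThetaProducts.

Section OddPart.
Variable R : nzRingType.
Implicit Types p q : {poly R}.

Lemma odd_poly_compM p q : odd_poly ((p \Po 'X^2) * q) = p * odd_poly q.
Proof.
apply/polyP => i; rewrite coef_odd_poly !coefM -doubleS -mul2n.
rewrite (sum_ord_mul2 i.+1 (fun j => (p \Po 'X^2)`_j * q`_(i.*2.+1 - j))).
apply: eq_bigr => l _; rewrite !coef_comp_poly_Xn // coef_odd_poly.
rewrite dvdn_mulr // dvdn2 /= negbK mul2n odd_double mul0r addr0 -mul2n mulKn //.
by congr (_ * q`_ _); have := ltn_ord l; rewrite -!mul2n; lia.
Qed.

Lemma eqX_odd_poly n p q : p = q %[modX 2 * n] -> odd_poly p = odd_poly q %[modX n].
Proof. by move=> pq i lt_in; rewrite !coef_odd_poly pq // -muln2; lia. Qed.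

Lemma eqX_comp n d p q : (0 < d)%N -> p = q %[modX n] ->
  p \Po 'X^d = q \Po 'X^d %[modX d * n].
Proof.
move=> d_gt0 pq i; rewrite !coef_comp_poly_Xn //; case: ifP => // /dvdnP[k ->].
by rewrite mulnK // mulnC ltn_pmul2l // => /pq.
Qed.

End OddPart.

Section EulerRelations.
Variable R : comNzRingType.

Lemma eulerf_double k L :
  eulerf R k (2 * L) = pochX (-1) k (2 * k) L * eulerf R (2 * k) L.
Proof. by rewrite /eulerf pochX_double addnn -mul2n. Qed.

Lemma pochXN1 b k L :
  pochX (-1 : R) b k L * pochX 1 b k L = pochX (-1) (2 * b) (2 * k) L.
Proof. by rewrite -[X in _ * pochX X _ _ _]opprK pochXN mulrNN mulr1. Qed.

Lemma eulerf_pochX1 k L : eulerf R k L * pochX 1 k k L = eulerf R (2 * k) L.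
Proof. exact: pochXN1. Qed.

Lemma theta_dissect K :
  theta (-1 : R) (2 * K) = (theta 1 K \Po 'X^4) - 2%:R * 'X * (psi R K \Po 'X^8).
Proof.
rewrite /theta /psi (sum_ord_mul2 K (fun k => (((-1 : R) ^+ k.+1)%:P * 'X^(k.+1 ^ 2)))).
rewrite comp_polyD rmorph1 rmorphM /= rmorph_nat !rmorph_sum /= !mulr_sumr.
rewrite -addrA -sumrB; congr (_ + _); apply: eq_bigr => i _.
rewrite comp_polyM comp_polyC !comp_Xn_poly -!exprM expr1n polyC1 mul1r.
have -> : ((-1 : R) ^+ (2 * i).+1) = -1 by rewrite exprS exprM sqrrN expr1n expr1n mulr1.
have -> : ((-1 : R) ^+ (2 * i).+2) = 1 by rewrite -addn2 -mulnSr exprM sqrrN !expr1n.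
have -> : ((2 * i).+1 ^ 2 = 1 + 8 * 'C(i.+1, 2))%N.
  by have := double_bin2 i.+1; rewrite -mul2n /=; nia.
have -> : ((2 * i).+2 ^ 2 = 4 * i.+1 ^ 2)%N by nia.
by rewrite polyCN polyC1 exprD; ring.
Qed.

Lemma odd_poly_sqr_comp (U V : {poly R}) :
  odd_poly ((U \Po 'X^2 + 'X * (V \Po 'X^2)) ^+ 2) = 2%:R * U * V.
Proof.
have -> : (U \Po 'X^2 + 'X * (V \Po 'X^2)) ^+ 2 =
    ((U ^+ 2 + 'X * V ^+ 2) \Po 'X^2) * 1 + ((2%:R * U * V) \Po 'X^2) * 'X.
  by rewrite !rmorphD !rmorphM /= comp_polyX rmorph_nat; ring.
rewrite odd_polyD !odd_poly_compM -polyC1 odd_polyC -[X in odd_poly X]mul1r odd_polyMX.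
by rewrite polyC1 -polyC1 even_polyC polyC1 mulr0 mulr1 add0r.
Qed.

Lemma theta_psi_eulerf M :
  2%:R * (theta 1 M * (psi R M \Po 'X^2) * eulerf R 1 M ^+ 2) = 2%:R * eulerf R 2 M ^+ 4
  %[modX M].
Proof.
have le_M2M : (M <= 2 * M)%N by rewrite leq_pmull.
have Th := theta_pochX (M := M) (mulr1 (1 : R)).
have Ps := eqX_le le_M2M (eqX_comp (isT : 0 < 2)%N (psi_pochX R (M := M))).
rewrite !rmorphM !rmorph_nat /= eulerf_comp !pochX_comp !muln1 -expr2 in Ps.
have F1 : eulerf R 1 M = pochX (-1) 1 2 M * eulerf R 2 M %[modX M].
  by rewrite -(eulerf_double 1 M); apply/eqX_sym/pochX_eqX => //; lia.
have CD : pochX (-1 : R) 2 4 M * pochX 1 2 2 M = 1 %[modX M].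
  apply: (@eqX_mulIr _ _ _ _ (eulerf R 2 M)); first exact: eulerf_coef0.
  rewrite -mulrA [pochX 1 2 2 M * _]mulrC eulerf_pochX1 mul1r -(eulerf_double 2 M).
  by apply: pochX_eqX => //; lia.
have -> : 2%:R * (theta 1 M * (psi R M \Po 'X^2) * eulerf R 1 M ^+ 2) =
    theta 1 M * (2%:R * (psi R M \Po 'X^2)) * eulerf R 1 M ^+ 2 by ring.
apply: eqX_trans (eqXM (eqXM (eqX_sym Th) (eqX_sym Ps)) (eqXXn 2 F1)) _.
rewrite -[X in _ = X %[modX M]]mul1r.
have -> : pochX 1 1 2 M ^+ 2 * eulerf R 2 M *
      (2%:R * (pochX 1 2 2 M ^+ 2 * eulerf R 2 M)) *
      (pochX (-1) 1 2 M * eulerf R 2 M) ^+ 2 =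
    (pochX (-1) 1 2 M * pochX 1 1 2 M * pochX 1 2 2 M) ^+ 2 * (2%:R * eulerf R 2 M ^+ 4).
  by ring.
by rewrite pochXN1; apply: eqX_trans (eqXMr _ (eqXXn 2 CD)) _; rewrite expr1n.
Qed.

Lemma odd_eulerf4 M :
  odd_poly (eulerf R 1 (2 * M) ^+ 4) =
  eulerf R 1 M ^+ 2 * (- 4%:R * ((theta 1 M \Po 'X^2) * (psi R M \Po 'X^4))) %[modX M].
Proof.
have ss1 : (-1 : R) * (-1) = 1 by rewrite mulrNN mulr1.
have Th : pochX (-1) 1 2 M ^+ 2 * eulerf R 2 M = theta (-1) (2 * M) %[modX 2 * M].
  apply: eqX_trans (theta_pochX ss1).
  by apply/eqXM; [apply/eqXXn | ]; apply/eqX_sym/pochX_eqX => //; lia.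
rewrite (eulerf_double 1 M).
have -> : (pochX (-1) 1 2 M * eulerf R 2 M) ^+ 4 =
    (pochX (-1) 1 2 M ^+ 2 * eulerf R 2 M) ^+ 2 * eulerf R 2 M ^+ 2 by ring.
apply: eqX_trans (eqX_odd_poly (eqXMr _ (eqXXn 2 Th))) _.
set U := theta 1 M \Po 'X^2; set V := - 2%:R * (psi R M \Po 'X^4).
have -> : theta (-1) (2 * M) = U \Po 'X^2 + 'X * (V \Po 'X^2).
  have X4 : 'X^2 \Po 'X^2 = 'X^4 :> {poly R} by rewrite comp_Xn_poly -exprM.
  have X8 : 'X^4 \Po 'X^2 = 'X^8 :> {poly R} by rewrite comp_Xn_poly -exprM.
  rewrite theta_dissect /U /V rmorphM rmorphN rmorph_nat /= -!comp_polyA X4 X8.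
  by ring.
rewrite -(eulerf_comp R 1 M 2) -rmorphXn mulrC odd_poly_compM odd_poly_sqr_comp.
suff -> : (2%:R : {poly R}) * U * V = - 4%:R * (U * (psi R M \Po 'X^4)) by [].
by rewrite /V; ring.
Qed.

End EulerRelations.

(** * Generating functions of b^k_{l,m} *)

Section RestrictedEuler.
Variable R : comNzRingType.

Definition euler_on (N : nat) (P : pred nat) : {poly R} :=
  \prod_(1 <= j < N.+1 | P j) (1 - 'X^j).

Lemma map_geom_trunc N j :
  map_poly intr (geom_trunc N j) = \sum_(i < N.+1) 'X^(i * j) :> {poly R}.
Proof. by rewrite rmorph_sum; apply: eq_bigr => i _; rewrite rmorphXn /= map_polyX. Qed.

Lemma geom_trunc_mulB N j :
  map_poly intr (geom_trunc N j) * (1 - 'X^j) = 1 - 'X^(N.+1 * j) :> {poly R}.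
Proof.
rewrite map_geom_trunc; elim: N => [|N IHN]; first by rewrite big_ord1 mul1n expr0 mul1r.
by rewrite big_ord_recr /= mulrDl IHN [(N.+2 * j)%N]mulSn exprD; ring.
Qed.

Lemma bpoly_euler_on k l m N :
  map_poly (intr : int -> R) (bpoly k l m N) *
    euler_on N (fun j => ~~ (l %| j) && ~~ (m %| j))%N ^+ k = 1 %[modX N.+1].
Proof.
rewrite /bpoly rmorph_prod /euler_on -prodrXl -big_split big_nat_cond /=.
apply: eqX_prod1 => j /andP[/andP[j_gt0 _] _].
have le_N : (N.+1 <= N.+1 * j)%N by rewrite leq_pmulr.
rewrite rmorphXn /= -exprMn geom_trunc_mulB.
by apply: eqX_trans (eqXXn k (eqX_1BXn _ le_N)) _; rewrite expr1n.
Qed.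

Lemma euler_on_dvd k N : (0 < k)%N -> euler_on N (dvdn k) = eulerf R k (N %/ k).
Proof.
move=> k_gt0; rewrite -qpoch_Xn; elim: N => [|N IHN].
  by rewrite /euler_on big_geq // div0n qpoch0.
rewrite /euler_on big_mkcond big_nat_recr //= -big_mkcond -/(euler_on N _) IHN divnS //.
case: ifP => [dvd_kN | _]; last by rewrite mulr1.
rewrite qpochS -exprM; congr (_ * (1 - 'X^_)).
by have := divnK dvd_kN; rewrite divnS // dvd_kN mulnC.
Qed.

Lemma euler_on_eqX k N : (0 < k)%N -> euler_on N (dvdn k) = eulerf R k N.+1 %[modX N.+1].
Proof.
move=> k_gt0; rewrite euler_on_dvd //; apply/eqX_sym/pochX_eqX.
  by rewrite (leq_trans (leq_div N k)).
by have := ltn_pmod N k_gt0; have := divn_eq N k; nia.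
Qed.

Lemma euler_on_coprime l m N : coprime l m ->
  euler_on N (dvdn l) * euler_on N (dvdn m) =
  euler_on N (fun j => (l %| j) || (m %| j))%N * euler_on N (dvdn (l * m)).
Proof.
move=> co_lm.
have El : euler_on N (fun j => (l %| j) || (m %| j))%N =
          euler_on N (dvdn l) * euler_on N (fun j => ~~ (l %| j) && (m %| j))%N.
  rewrite /euler_on (bigID (dvdn l)); congr (_ * _); apply: eq_bigl => j;
    by case: (l %| j)%N; rewrite /= ?andbT ?andbF.
have Em : euler_on N (dvdn m) = euler_on N (fun j => (l %| j) && (m %| j))%N *
          euler_on N (fun j => ~~ (l %| j) && (m %| j))%N.
  by rewrite /euler_on (bigID (dvdn l)); congr (_ * _); apply: eq_bigl => j; rewrite andbC.
have Elm : euler_on N (dvdn (l * m)) = euler_on N (fun j => (l %| j) && (m %| j))%N.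
  by apply: eq_bigl => j; rewrite Gauss_dvd.
by rewrite El Em Elm; ring.
Qed.

Lemma bpoly_eulerf k l m N : coprime l m -> (0 < l)%N -> (0 < m)%N ->
  map_poly (intr : int -> R) (bpoly k l m N) *
    (eulerf R 1 N.+1 * eulerf R (l * m) N.+1) ^+ k
    = (eulerf R l N.+1 * eulerf R m N.+1) ^+ k %[modX N.+1].
Proof.
move=> co_lm l_gt0 m_gt0; have lm_gt0 : (0 < l * m)%N by rewrite muln_gt0 l_gt0 m_gt0.
set B := map_poly _ _; set E := euler_on N.
set Pno := (fun j => ~~ (l %| j) && ~~ (m %| j))%N.
set Por := (fun j => (l %| j) || (m %| j))%N.
have E1 : E (dvdn 1) = E Pno * E Por.
  rewrite /E /euler_on (bigID Por) mulrC /=.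
  by congr (_ * _); apply: eq_bigl => j; rewrite dvd1n // /Pno /Por negb_or.
apply: (@eqX_trans _ _ _ (B * (E (dvdn 1) * E (dvdn (l * m))) ^+ k)).
  by apply/eqXMl/eqXXn/eqXM; apply/eqX_sym/euler_on_eqX.
apply: (@eqX_trans _ _ _ ((E (dvdn l) * E (dvdn m)) ^+ k)); last first.
  by apply/eqXXn/eqXM; apply: euler_on_eqX.
rewrite /E (euler_on_coprime N co_lm) -/E E1 -/Por.
have -> : B * (E Pno * E Por * E (dvdn (l * m))) ^+ k =
          (B * E Pno ^+ k) * (E Por * E (dvdn (l * m))) ^+ k by rewrite !exprMn; ring.
by rewrite -[X in _ = X %[modX _]]mul1r; apply/eqXMr/bpoly_euler_on.
Qed.

End RestrictedEuler.

(** * Reduction modulo 3 *)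

Section CharacteristicThree.
Variables (R : comNzRingType) (char3 : 3 \in [pchar R]).

Lemma exprB1_pchar3 (x : {poly R}) : (1 - x) ^+ 3 = 1 - x ^+ 3.
Proof.
have three0 : 3%:R = 0 :> {poly R} by rewrite -polyC_natr (pcharf0 char3) polyC0.
by transitivity (1 - x ^+ 3 - 3%:R * (x - x ^+ 2)); [ring | rewrite three0 mul0r subr0].
Qed.

Lemma eulerf_pchar3 k L : eulerf R (3 * k) L = eulerf R k L ^+ 3.
Proof.
rewrite -!qpoch_Xn /qpoch -prodrXl; apply: eq_bigr => i _.
by rewrite exprB1_pchar3 -!exprM; congr (1 - 'X^_); nia.
Qed.

Lemma bpoly238_eulerf N :
  map_poly (intr : int -> R) (bpoly 2 3 8 N) * eulerf R 8 N.+1 ^+ 4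
    = eulerf R 1 N.+1 ^+ 4 %[modX N.+1].
Proof.
have := @bpoly_eulerf R 2 3 8 N isT isT isT.
rewrite (eulerf_pchar3 1) (eulerf_pchar3 8).
set B := map_poly _ _; set f1 := eulerf R 1 N.+1; set f8 := eulerf R 8 N.+1 => H.
apply: (@eqX_mulIr _ _ _ _ (f1 ^+ 2 * f8 ^+ 2)).
  by rewrite coef0M !coef0_exprn ?eulerf_coef0 ?expr1n ?mulr1.
have -> : B * f8 ^+ 4 * (f1 ^+ 2 * f8 ^+ 2) = B * (f1 * f8 ^+ 3) ^+ 2 by ring.
by have -> : f1 ^+ 4 * (f1 ^+ 2 * f8 ^+ 2) = (f1 ^+ 3 * f8) ^+ 2 by ring.
Qed.

Lemma bpoly123_eulerf N :
  map_poly (intr : int -> R) (bpoly 1 2 3 N) * eulerf R 2 N.+1 ^+ 2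
    = eulerf R 1 N.+1 ^+ 2 %[modX N.+1].
Proof.
have := @bpoly_eulerf R 1 2 3 N isT isT isT.
rewrite (eulerf_pchar3 1) (eulerf_pchar3 2) !expr1.
set C := map_poly _ _; set f1 := eulerf R 1 N.+1; set f2 := eulerf R 2 N.+1 => H.
apply: (@eqX_mulIr _ _ _ _ (f1 * f2)); first by rewrite coef0M !eulerf_coef0 ?mulr1.
have -> : C * f2 ^+ 2 * (f1 * f2) = C * (f1 * f2 ^+ 3) by ring.
by have -> : f1 ^+ 2 * (f1 * f2) = f2 * f1 ^+ 3 by ring.
Qed.

Lemma odd_bpoly238 n :
  odd_poly (map_poly (intr : int -> R) (bpoly 2 3 8 (2 * n).+1))
    = - 4%:R * map_poly (intr : int -> R) (bpoly 1 2 3 n) %[modX n.+1].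
Proof.
set M := n.+1; set B := map_poly _ (bpoly 2 3 8 _); set C := map_poly _ (bpoly 1 2 3 _).
set f1 := eulerf R 1 M; set f2 := eulerf R 2 M; set f4 := eulerf R 4 M.
set U := theta (1 : R) M \Po 'X^2; set W := psi R M \Po 'X^4.
have HB : f4 ^+ 4 * odd_poly B = odd_poly (eulerf R 1 (2 * M) ^+ 4) %[modX M].
  have := bpoly238_eulerf (N := (2 * n).+1).
  rewrite (_ : (2 * n).+2 = 2 * M)%N; last by rewrite /M; lia.
  move/eqX_odd_poly; rewrite -(eulerf_comp R 4 _ 2) -rmorphXn mulrC odd_poly_compM.
  apply: eqX_trans.
  by apply/eqXMr/eqXXn/eqX_sym/pochX_eqX => //; lia.
have HU : 2%:R * (U * W * f2 ^+ 2) = 2%:R * f4 ^+ 4 %[modX M].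
  have := eqX_comp (isT : 0 < 2)%N (@theta_psi_eulerf R M).
  move/(eqX_le (leq_pmull M (isT : 0 < 2)%N)).
  by rewrite !rmorphM !rmorph_nat /= !eulerf_comp -comp_polyA comp_Xn_poly -exprM.
apply: (@eqX_mulIr _ _ _ _ (f4 ^+ 4 * f2 ^+ 2)).
  by rewrite coef0M !coef0_exprn !eulerf_coef0 // !expr1n mulr1.
apply: (@eqX_trans _ _ _ (f1 ^+ 2 * (- 4%:R * (U * W)) * f2 ^+ 2)).
  by rewrite mulrA [odd_poly B * _]mulrC; apply/eqXMr/(eqX_trans HB)/odd_eulerf4.
apply: (@eqX_trans _ _ _ (- 2%:R * f1 ^+ 2 * (2%:R * f4 ^+ 4))).
  have -> : f1 ^+ 2 * (- 4%:R * (U * W)) * f2 ^+ 2 =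
            - 2%:R * f1 ^+ 2 * (2%:R * (U * W * f2 ^+ 2)) by ring.
  exact: eqXMl.
have -> : - 2%:R * f1 ^+ 2 * (2%:R * f4 ^+ 4) = - 4%:R * f1 ^+ 2 * f4 ^+ 4 by ring.
have -> : - 4%:R * C * (f4 ^+ 4 * f2 ^+ 2) = - 4%:R * (C * f2 ^+ 2) * f4 ^+ 4 by ring.
by apply/eqXMr/eqXMl/eqX_sym/bpoly123_eulerf.
Qed.

End CharacteristicThree.

Unset Implicit Arguments.

Theorem mainTheorem6 (n : nat) :
  (0 < n)%N ->
  (bklm 2 3 8 (2 * n + 1) = 2 * bklm 1 2 3 n %[mod 3])%Z.
Proof.
(* The congruence holds for n = 0 as well. *)
move=> _; have char3 : 3 \in [pchar 'F_3] := @pchar_Fp 3 isT.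
have := @odd_bpoly238 _ char3 n n (ltnSn n).
rewrite coef_odd_poly mulNr coefN (mulr_natl _ 4) coefMn !coef_map /= -mul2n => odd_coef.
apply/eqP; rewrite eqz_mod_dvd (dvdz_pcharf char3) rmorphB rmorphM /= /bklm addn1 odd_coef.
have six0 : 6%:R = 0 :> 'F_3 by rewrite (natrM _ 3 2) (pcharf0 char3) mul0r.
set y : 'F_3 := ((bpoly 1 2 3 n)`_n)%:~R.
by apply/eqP; transitivity (- (y * 6%:R)); [ring | rewrite six0 mulr0 oppr0].
Qed.
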